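(* Let $N$ be a phylogenetic network on $X\subseteq[n]$ and let $i,j\in[n]$, $i\neq j$. Then $(i,j)$ is a cherry of $N$ if and only if $(i,j)$ is a cherry of the multiset $\boldsymbol\mu(N)$.
   Context: A (binary) phylogenetic network on a finite set $X\subseteq[n]=\{1,\dots,n\}$ is a directed acyclic graph $N=(V,A)$ without parallel arcs in which every node is exactly one of: the root (indegree 0, outdegree 1; there is exactly one), a leaf (indegree 1, outdegree 0), a tree node (indegree 1, outdegree 2), or a reticulation (indegree 2, outdegree 1); the leaves are identified with the elements of $X$. $V_T(N)$ denotes the set of leaves and tree nodes, $V_H(N)$ the set of reticulations. Paths are directed and trivial paths of length 0 are allowed; $m(u,v)$ denotes the number of directed paths from $u$ to $v$. Extended $\mu$-vectors: for $u\in V$ and $i\in[n]$, $\mu_i(u)=m(u,i)$ (which is $0$ if $i\notin X$), and $\mu_0(u)=\sum_{h\in V_H(N)} m(u,h)$; $\mu(u)=(\mu_0(u),\dots,\mu_n(u))$. The (extended) $\mu$-representation $\boldsymbol\mu(N)$ is the multiset $\{\mu(u)\mid u\in V_T(N)\}$, each vector counted with the number of nodes of $V_T(N)$ having it. For $S\subseteq\{0,\dots,n\}$, $\delta_S$ is the 0/1 indicator vector of $S$ indexed by $0,\dots,n$, and $\delta_{j_1,\dots,j_k}=\delta_{\{j_1,\dots,j_k\}}$. In a network, for distinct leaves $i,j$ with parents $p_i,p_j$, $(i,j)$ is a cherry of $N$ if $p_i=p_j$. For a finite multiset $\boldsymbol\mu$ of vectors of nonnegative integers indexed by $0,\dots,n$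 and distinct $i,j\in[n]$, $(i,j)$ is a cherry of $\boldsymbol\mu$ if $\delta_{i,j}$ belongs to $\boldsymbol\mu$ with multiplicity exactly $1$, and every element $\mu=(\mu_0,\dots,\mu_n)$ of $\boldsymbol\mu$ other than $\delta_i$ and $\delta_j$ satisfies $\mu_i=\mu_j$. *)

From mathcomp Require Import all_boot.
Set Implicit Arguments. Unset Strict Implicit. Unset Printing Implicit Defensive.

Section Network.
Variables (V : finType) (A : rel V).

Definition indeg (v : V) : nat := #|[set u | A u v]|.
Definition outdeg (v : V) : nat := #|[set w | A v w]|.

Definition is_root (v : V) : bool := (indeg v == 0) && (outdeg v == 1).
Definition is_leaf (v : V) : bool := (indeg v == 1) && (outdeg v == 0).
Definition is_tree_node (v : V) : bool := (indeg v == 1) && (outdeg v == 2).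
Definition is_reticulation (v : V) : bool := (indeg v == 2) && (outdeg v == 1).

Definition acyclic : Prop :=
  forall (u : V) (p : seq V), path A u p -> last u p = u -> p = [::].

(* number of directed paths (vertex sequences u :: p, trivial path allowed)
   from u to v; in an acyclic graph every path has fewer than #|V| arcs,
   so this counts all directed paths. *)
Definition npaths (u v : V) : nat :=
  \sum_(k < #|V|) #|[set t : k.-tuple V | path A u t && (last u t == v)]|.

End Network.

(* A binary phylogenetic network on X ⊆ [n], X = set of leaf labels.
   lab identifies leaves with elements of [n] = {1..n} (injectively);
   its values on non-leaves are irrelevant. *)
Definition is_network (n : nat) (V : finType) (A : rel V) (lab : V -> nat) : Prop :=
  [/\ acyclic A,
      (exists r : V, is_root A r /\ forall r', is_root A r' -> r' = r),
      (forall v : V, [|| is_root A v, is_leaf A v, is_tree_node A v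
                       | is_reticulation A v]),
      (forall w : V, is_leaf A w -> 0 < lab w <= n) &
      (forall w w' : V, is_leaf A w -> is_leaf A w' -> lab w = lab w' -> w = w')].

Section Mu.
Variables (n : nat) (V : finType) (A : rel V) (lab : V -> nat).

(* mu_i(u) = m(u, i) for i in [n] (0 if i is not a leaf label) *)
Definition mu_leaf (i : nat) (u : V) : nat :=
  \sum_(w : V | is_leaf A w && (lab w == i)) npaths A u w.

Definition mu_ret (u : V) : nat :=
  \sum_(h : V | is_reticulation A h) npaths A u h.

Definition muvec (u : V) : {ffun 'I_n.+1 -> nat} :=
  [ffun k : 'I_n.+1 => if val k == 0 then mu_ret u else mu_leaf (val k) u].

(* the extended mu-representation, as a multiset (seq up to permutation)
   over the leaves and tree nodes V_T(N) *)
Definition mu_rep : seq {ffun 'I_n.+1 -> nat} :=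
  [seq muvec u | u <- enum V & is_leaf A u || is_tree_node A u].

Definition net_cherry (i j : nat) : Prop :=
  exists wi wj p : V, is_leaf A wi /\ is_leaf A wj /\ lab wi = i /\ lab wj = j /\
                          A p wi /\ A p wj.
End Mu.

Definition delta (n : nat) (S : seq nat) : {ffun 'I_n.+1 -> nat} :=
  [ffun k : 'I_n.+1 => nat_of_bool (val k \in S)].

Definition ms_cherry (n : nat) (mus : seq {ffun 'I_n.+1 -> nat}) (i j : 'I_n.+1) : Prop :=
  count_mem (delta n [:: val i; val j]) mus = 1 /\
  forall x, x \in mus -> x != delta n [:: val i] -> x != delta n [:: val j] -> x i = x j.

From mathcomp Require Import all_boot.
From mathcomp Require Import zify.
Set Implicit Arguments. Unset Strict Implicit. Unset Printing Implicit Defensive.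

(* First, for any finite acyclic digraph, the path counts m(u,v) satisfy
   m(u,v) = [u = v] + sum over the children c of u of m(c,v), and arcs
   support well-founded induction.  In a network this gives: m(u,w) =
   [u = w] + m(u,p) when p is the parent of a leaf w; the path counts at a
   tree node split along its two children; and the "leaf mass" of u (the
   number of paths from u to leaves), which equals the sum of the leaf
   coordinates of mu(u), is 1 at leaves, additive at tree nodes, hence at
   least 2 at tree nodes.

   If mu(u) = delta_{i,j} for u in V_T(N), the leaf mass of u is 2 and u
   reaches no reticulation, which forces u to be a tree node whose two
   children are the leaves labelled i and j.  Conversely the parent of a
   cherry (i,j) has mu-vector delta_{i,j}, is the only such node, and every
   other mu-vector counts paths to i and to j through that parent, so it
   takes equal values at i and j. *)

Lemma sum_pred1 (T : finType) (P : pred T) (y : T) : \sum_(x | P x) (x == y) = P y.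
Proof.
case Py: (P y); last by rewrite big1 // => x Px; case: eqP => // xy; rewrite -xy Px in Py.
by rewrite (bigD1 y) //= eqxx big1 // => x /andP[_ /negbTE ->].
Qed.

Section Dag.
Variables (V : finType) (A : rel V).
Hypothesis acA : acyclic A.

Lemma child_not_reach u c : A u c -> ~~ connect A c u.
Proof.
move=> Auc; apply/negP => /connectP [p Pp Hl].
by have := acA (u := u) (p := c :: p); rewrite /= Auc Pp -Hl => /(_ isT erefl).
Qed.

Lemma path_uniq u t : path A u t -> uniq (u :: t).
Proof.
elim: t u => [|x t IH] u // /andP[Aux Pt].
rewrite cons_uniq (IH _ Pt) andbT; apply/negP => /(path_connect Pt) ux.
by move: (child_not_reach Aux); rewrite ux.
Qed.

(* Induction along the arcs: the number of nodes reachable from u strictly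
   decreases when passing to a child of u. *)
Lemma dag_ind (P : V -> Prop) :
  (forall u, (forall c, A u c -> P c) -> P u) -> forall u, P u.
Proof.
pose reach u := #|[set x | connect A u x]|.
have reach_child u c : A u c -> reach c < reach u.
  move=> Auc; apply: proper_card; apply/properP; split.
    by apply/subsetP => x; rewrite !inE; apply: connect_trans (connect1 Auc).
  by exists u; rewrite !inE ?connect0 // child_not_reach.
move=> IH u; have [m] := ubnP (reach u); elim: m u => // m IHm u Hu.
by apply: IH => c Ac; apply: IHm; apply: leq_trans (reach_child _ _ Ac) Hu.
Qed.

Definition npaths_len (u v : V) (k : nat) : nat :=
  #|[set t : k.-tuple V | path A u t && (last u t == v)]|.

Lemma npaths_len0 u v : npaths_len u v 0 = (u == v).
Proof.
rewrite /npaths_len.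
have -> : [set t : 0.-tuple V | path A u t && (last u t == v)] =
          if u == v then [set [tuple]] else set0.
  by apply/setP => t; rewrite (tuple0 t) !inE /=; case: (u == v); rewrite ?inE.
by case: (u == v); rewrite ?cards1 ?cards0.
Qed.

Lemma sum_cons_tuple (T : finType) k (F : k.+1.-tuple T -> nat) :
  \sum_(t : k.+1.-tuple T) F t = \sum_(c : T) \sum_(t : k.-tuple T) F (cons_tuple c t).
Proof.
rewrite pair_bigA (reindex (fun p : T * k.-tuple T => cons_tuple p.1 p.2)) //.
apply: onW_bij; exists (fun t => (thead t, behead_tuple t)).
  by case=> c t /=; congr pair; apply: val_inj.
by move=> t; rewrite [RHS]tuple_eta; apply: val_inj.
Qed.

Lemma npaths_lenS u v k : npaths_len u v k.+1 = \sum_(c | A u c) npaths_len c v k.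
Proof.
rewrite /npaths_len -sum1_card big_mkcond sum_cons_tuple [RHS]big_mkcond.
apply: eq_bigr => c _; under eq_bigr do rewrite inE /=.
case: (A u c); last by rewrite big1.
by rewrite -sum1_card [RHS]big_mkcond; apply: eq_bigr => t _; rewrite inE.
Qed.

Lemma npaths_len_child u c v : A u c -> npaths_len c v #|V|.-1 = 0.
Proof.
move=> Auc; apply/eqP; rewrite cards_eq0; apply/eqP/setP => t; rewrite !inE.
apply/negbTE/negP => /andP[Pt _].
have U : uniq (u :: c :: t) by apply: path_uniq; rewrite /= Auc.
have := max_card (mem (u :: c :: val t)); rewrite (card_uniqP U) /= size_tuple.
by case: #|V| => [|N]; rewrite ?ltnn.
Qed.

Lemma npathsE u v : npaths A u v = (u == v) + \sum_(c | A u c) npaths A c v.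
Proof.
have np_nat w : npaths A w v = \sum_(0 <= k < #|V|) npaths_len w v k.
  by rewrite big_mkord.
have : 0 < #|V| by apply/card_gt0P; exists u.
rewrite np_nat; under [in RHS]eq_bigr do rewrite np_nat.
case E: #|V| => [//|N] _.
rewrite big_nat_recl // npaths_len0; congr addn.
under eq_bigr do rewrite npaths_lenS.
rewrite exchange_big /=; apply: eq_bigr => c Auc.
have := npaths_len_child v Auc; rewrite E => /= long.
by rewrite big_nat_recr //= long addn0.
Qed.

Lemma npaths_refl u : 0 < npaths A u u.
Proof. by rewrite npathsE eqxx. Qed.

Lemma npaths_child u c v : A u c -> npaths A c v <= npaths A u v.
Proof. by move=> Auc; rewrite [npaths A u v]npathsE (bigD1 c) //=; lia. Qed.

End Dag.

Lemma delta_pair n (i j : nat) (k : 'I_n.+1) : i != j ->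
  delta n [:: i; j] k = (val k == i) + (val k == j).
Proof. by move=> ij; rewrite ffunE !inE; case: eqP => // ->; rewrite (negbTE ij). Qed.

Lemma sum_delta_pair n (i j : 'I_n.+1) : 0 < val i -> 0 < val j -> i != j ->
  \sum_(k : 'I_n.+1 | 0 < k) delta n [:: val i; val j] k = 2.
Proof.
move=> i0 j0 ij; under eq_bigr do rewrite delta_pair //.
by rewrite big_split /= !sum_pred1 i0 j0.
Qed.

Section Network.
Variables (n : nat) (V : finType) (A : rel V) (lab : V -> nat).
Hypothesis netN : is_network n A lab.

Let acA : acyclic A. Proof. by case: netN. Qed.

Lemma node_kinds v :
  [|| is_root A v, is_leaf A v, is_tree_node A v | is_reticulation A v].
Proof. by case: netN. Qed.

Lemma leaf_lab_range w : is_leaf A w -> 0 < lab w <= n.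
Proof. by case: netN => _ _ _ + _; apply. Qed.

Lemma leaf_lab_inj w w' : is_leaf A w -> is_leaf A w' -> lab w = lab w' -> w = w'.
Proof. by case: netN => _ _ _ _; apply. Qed.

Lemma leaf_no_child w c : is_leaf A w -> A w c = false.
Proof.
case/andP=> _; rewrite /outdeg cards_eq0 => /eqP out0.
by apply/negbTE/negP => Awc; have := in_set0 c; rewrite -out0 inE Awc.
Qed.

Lemma leaf_parent_uniq w p q : is_leaf A w -> A p w -> A q w -> p = q.
Proof.
case/andP=> /cards1P [x in1] _ Apw Aqw.
have : p \in [set u | A u w] by rewrite inE.
have : q \in [set u | A u w] by rewrite inE.
by rewrite in1 !inE => /eqP -> /eqP ->.
Qed.

Lemma child_not_root u c : A u c -> ~~ is_root A c.
Proof.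
move=> Auc; apply/negP => /andP[]; rewrite /indeg cards_eq0 => /eqP in0 _.
by have := in_set0 u; rewrite -in0 inE Auc.
Qed.

Lemma not_leaf_child u : ~~ is_leaf A u -> exists c, A u c.
Proof.
move=> nLu; have : 0 < outdeg A u.
  move: (node_kinds u); rewrite (negbTE nLu).
  by case/or4P => // /andP[_ /eqP ->].
by case/card_gt0P => c; rewrite inE; exists c.
Qed.

Lemma leaf_not_ret w : is_leaf A w -> is_reticulation A w = false.
Proof. by case/andP => /eqP in1 _; rewrite /is_reticulation in1. Qed.

Lemma tree_not_leaf w : is_tree_node A w -> is_leaf A w = false.
Proof. by case/andP => _ /eqP out2; rewrite /is_leaf out2 andbF. Qed.

Lemma tree_not_ret w : is_tree_node A w -> is_reticulation A w = false.
Proof. by case/andP => /eqP in1 _; rewrite /is_reticulation in1. Qed.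

Lemma tree_node_children u : is_tree_node A u -> exists a b, [/\ a != b, A u a & A u b].
Proof.
case/andP=> _ /cards2P [a [b [ab out2]]]; exists a, b.
by split=> //; [have := set21 a b | have := set22 a b]; rewrite -out2 inE.
Qed.

Lemma tree_children_only u a b : is_tree_node A u -> a != b -> A u a -> A u b ->
  forall x, A u x = (x == a) || (x == b).
Proof.
case/andP=> _ /eqP out2 ab Aua Aub x.
have : [set a; b] == [set y | A u y].
  rewrite eqEcard cards2 ab -[#|_|]/(outdeg A u) out2 leqnn andbT.
  by apply/subsetP => y; rewrite !inE => /orP[] /eqP ->.
by move/eqP/setP/(_ x); rewrite !inE.
Qed.

Lemma two_children_tree p a b : a != b -> A p a -> A p b -> is_tree_node A p.
Proof.
move=> ab Apa Apb; have out2 : 2 <= outdeg A p.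
  have := cards2 a b; rewrite ab => <-; apply: subset_leq_card.
  by apply/subsetP => x; rewrite !inE => /orP[] /eqP ->.
move: (node_kinds p) out2.
by case/or4P => // /andP[_ /eqP ->].
Qed.

Lemma npaths_tree u a b v : is_tree_node A u -> a != b -> A u a -> A u b ->
  npaths A u v = (u == v) + npaths A a v + npaths A b v.
Proof.
move=> Tu ab Aua Aub; have chu := tree_children_only Tu ab Aua Aub.
rewrite (npathsE acA) (bigD1 a) //= (big_pred1 b) ?addnA // => x /=.
by rewrite chu; case: eqP => [->|] /=; rewrite ?(negbTE ab) ?andbT.
Qed.

Lemma npaths_leaf w v : is_leaf A w -> npaths A w v = (w == v).
Proof.
by move=> Lw; rewrite (npathsE acA) big_pred0 ?addn0 // => c; apply: leaf_no_child.
Qed.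

Lemma sum_npaths_leaf w (P : pred V) : is_leaf A w -> \sum_(x | P x) npaths A w x = P w.
Proof.
by move=> Lw; rewrite -(sum_pred1 P w); apply: eq_bigr => x _; rewrite npaths_leaf // eq_sym.
Qed.

(* Every path to a leaf w, except the trivial one, passes through its parent p. *)
Lemma npaths_via_parent w p u : is_leaf A w -> A p w ->
  npaths A u w = (u == w) + npaths A u p.
Proof.
move=> Lw Apw; elim/(dag_ind acA): u => u IH.
rewrite (npathsE acA u w) (npathsE acA u p).
rewrite (eq_bigr (fun c => (c == w) + npaths A c p)) => [|c /IH //].
rewrite big_split /= sum_pred1.
have -> // : A u w = (u == p).
by apply/idP/eqP => [Auw|->//]; apply: leaf_parent_uniq Lw Auw Apw.
Qed.

Definition leaf_mass (u : V) : nat := \sum_(w | is_leaf A w) npaths A u w.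

Lemma leaf_mass_leaf w : is_leaf A w -> leaf_mass w = 1.
Proof. by move=> Lw; rewrite /leaf_mass sum_npaths_leaf ?Lw. Qed.

Lemma leaf_mass_pos u : 0 < leaf_mass u.
Proof.
elim/(dag_ind acA): u => u IH.
case: (boolP (is_leaf A u)) => [Lu|nLu]; first by rewrite leaf_mass_leaf.
have [c Auc] := not_leaf_child nLu; apply: leq_trans (IH c Auc) _.
by apply: leq_sum => w _; apply: npaths_child.
Qed.

Lemma leaf_mass_tree u a b : is_tree_node A u -> a != b -> A u a -> A u b ->
  leaf_mass u = leaf_mass a + leaf_mass b.
Proof.
move=> Tu ab Aua Aub; rewrite /leaf_mass -big_split /=; apply: eq_bigr => w Lw.
rewrite (npaths_tree _ Tu ab Aua Aub) -addnA.
by case: eqP => [uw|]; first by rewrite -uw (tree_not_leaf Tu) in Lw.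
Qed.

Lemma leaf_mass_tree_ge2 u : is_tree_node A u -> 2 <= leaf_mass u.
Proof.
move=> Tu; have [a [b [ab Aua Aub]]] := tree_node_children Tu.
by rewrite (leaf_mass_tree Tu ab Aua Aub) -addn1 leq_add ?leaf_mass_pos.
Qed.

Lemma muvec_leaf_coord u (k : 'I_n.+1) : 0 < k -> muvec n A lab u k = mu_leaf A lab k u.
Proof. by move=> k0; rewrite ffunE eqn0Ngt k0. Qed.

Lemma mu_leaf_lab u w : is_leaf A w -> mu_leaf A lab (lab w) u = npaths A u w.
Proof.
move=> Lw; rewrite /mu_leaf (big_pred1 w) // => x /=.
by apply/andP/eqP => [[Lx /eqP]|->]; [apply: leaf_lab_inj | rewrite eqxx].
Qed.

Lemma muvec_lab u w : is_leaf A w -> muvec n A lab u (inord (lab w)) = npaths A u w.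
Proof.
move=> Lw; have /andP[lab0 labn] := leaf_lab_range Lw.
have labK : nat_of_ord (inord (lab w) : 'I_n.+1) = lab w by rewrite inordK.
by rewrite muvec_leaf_coord labK ?mu_leaf_lab.
Qed.

Lemma sum_muvec u : \sum_(k : 'I_n.+1 | 0 < k) muvec n A lab u k = leaf_mass u.
Proof.
under eq_bigr => k k0 do rewrite muvec_leaf_coord // /mu_leaf big_mkcond /=.
rewrite exchange_big /leaf_mass [RHS]big_mkcond /=; apply: eq_bigr => w _.
case: (boolP (is_leaf A w)) => [Lw|_] /=; last by rewrite big1.
have /andP[lab0 labn] := leaf_lab_range Lw.
rewrite -big_mkcondr (big_pred1 (inord (lab w))) // => k /=.
apply/andP/eqP => [[_ /eqP ->]|->]; first by rewrite inord_val.
by rewrite inordK ?eqxx.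
Qed.

Lemma muvec_leaf w : is_leaf A w -> muvec n A lab w = delta n [:: lab w].
Proof.
move=> Lw; have /andP[lab0 _] := leaf_lab_range Lw.
apply/ffunP => k; rewrite !ffunE inE /mu_ret /mu_leaf !sum_npaths_leaf //.
case: eqP => [k0|_]; first by rewrite leaf_not_ret // k0; case: eqP lab0 => // <-.
by rewrite Lw eq_sym.
Qed.

Lemma muvec_cherry p wi wj : is_leaf A wi -> is_leaf A wj -> lab wi != lab wj ->
  A p wi -> A p wj -> muvec n A lab p = delta n [:: lab wi; lab wj].
Proof.
move=> Li Lj lij Api Apj.
have wij : wi != wj by apply: contra lij => /eqP ->.
have Tp := two_children_tree wij Api Apj.
have paths_from_p P : \sum_(x | P x) npaths A p x = P p + P wi + P wj.
  rewrite -!(sum_pred1 P) -!big_split /=; apply: eq_bigr => x _.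
  by rewrite (npaths_tree _ Tp wij Api Apj) !npaths_leaf // ![_ == x]eq_sym.
apply/ffunP => k; rewrite delta_pair // ffunE /mu_ret /mu_leaf !paths_from_p /=.
have /andP[li0 _] := leaf_lab_range Li; have /andP[lj0 _] := leaf_lab_range Lj.
case: eqP => [->|_].
  by rewrite tree_not_ret // !leaf_not_ret // ![0 == _]eq_sym !eqn0Ngt li0 lj0.
by rewrite tree_not_leaf // Li Lj ![_ == val k]eq_sym.
Qed.

Lemma children_leaves u c : is_tree_node A u -> leaf_mass u = 2 ->
  mu_ret A u = 0 -> A u c -> is_leaf A c.
Proof.
move=> Tu mass2 ret0 Auc.
have [a [b [ab Aua Aub]]] := tree_node_children Tu.
have mass_c : leaf_mass c = 1.
  have := leaf_mass_tree Tu ab Aua Aub; rewrite mass2.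
  have := leaf_mass_pos a; have := leaf_mass_pos b.
  by move: Auc; rewrite (tree_children_only Tu ab Aua Aub) => /orP[] /eqP ->; lia.
have not_ret : is_reticulation A c = false.
  apply/negbTE/negP => Rc; move: ret0; rewrite /mu_ret (bigD1 c) //=.
  by have := leq_trans (npaths_refl acA c) (npaths_child acA c Auc); lia.
move: (node_kinds c); rewrite not_ret (negbTE (child_not_root Auc)) orbF /=.
by case/orP => // Tc; have := leaf_mass_tree_ge2 Tc; rewrite mass_c.
Qed.

(* A node of V_T(N) whose mu-vector is delta_{i,j} is the parent of the
   leaves labelled i and j: its leaf mass is 2, so it is a tree node whose
   children are leaves, and their labels are coordinates where mu is 1. *)
Lemma parent_of_delta_pair u (i j : 'I_n.+1) : 0 < val i -> 0 < val j -> i != j ->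
  is_leaf A u || is_tree_node A u -> muvec n A lab u = delta n [:: val i; val j] ->
  exists wi wj, is_leaf A wi /\ is_leaf A wj /\ lab wi = val i /\ lab wj = val j /\
                A u wi /\ A u wj.
Proof.
move=> i0 j0 ij VTu Eu.
have mass2 : leaf_mass u = 2 by rewrite -sum_muvec Eu sum_delta_pair.
have Tu : is_tree_node A u by case/orP: VTu => // Lu; rewrite leaf_mass_leaf in mass2.
have ret0 : mu_ret A u = 0.
  by move/ffunP/(_ ord0): Eu; rewrite !ffunE /= !inE ![0 == _]eq_sym !eqn0Ngt i0 j0.
have child_lab c : A u c -> is_leaf A c /\ lab c \in [:: val i; val j].
  move=> Auc; have Lc := children_leaves Tu mass2 ret0 Auc; split => //.
  have /andP[_ labn] := leaf_lab_range Lc.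
  have := muvec_lab u Lc; rewrite Eu ffunE /= inordK ?ltnS // => reach.
  have := leq_trans (npaths_refl acA c) (npaths_child acA c Auc).
  by rewrite -reach; case: (_ \in _).
have [a [b [ab Aua Aub]]] := tree_node_children Tu.
have [[La la] [Lb lb]] := (child_lab a Aua, child_lab b Aub).
have lab_ab : lab a != lab b by apply: contra ab => /eqP /(leaf_lab_inj La Lb) ->.
move: la lb; rewrite !inE => /orP[] /eqP la /orP[] /eqP lb.
- by rewrite la lb eqxx in lab_ab.
- by exists a, b.
- by exists b, a.
- by rewrite la lb eqxx in lab_ab.
Qed.

Lemma cherry_count p wi wj (i j : 'I_n.+1) : 0 < val i -> 0 < val j -> i != j ->
  is_leaf A wi -> is_leaf A wj -> lab wi = val i -> lab wj = val j -> A p wi -> A p wj ->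
  count_mem (delta n [:: val i; val j]) (mu_rep n A lab) = 1.
Proof.
move=> i0 j0 ij Li Lj li lj Api Apj.
have wij : wi != wj by apply: contra ij => /eqP wij; rewrite -val_eqE /= -li -lj wij.
have Ep : muvec n A lab p = delta n [:: val i; val j].
  by rewrite -li -lj; apply: muvec_cherry; rewrite ?li ?lj.
rewrite /mu_rep count_map count_filter.
rewrite (eq_count (a2 := pred1 p)) ?count_uniq_mem ?enum_uniq ?mem_enum // => u /=.
apply/andP/eqP => [[/eqP Eu VTu] | ->]; last first.
  by rewrite Ep eqxx (two_children_tree wij Api Apj) orbT.
have [wi' [_ [Li' [_ [li' [_ [Auwi' _]]]]]]] := parent_of_delta_pair i0 j0 ij VTu Eu.
have wi'i : wi' = wi by apply: leaf_lab_inj; rewrite ?li' ?li.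
by rewrite wi'i in Auwi'; apply: leaf_parent_uniq Li Auwi' Api.
Qed.

(* If (i,j) is a cherry of N, every other mu-vector takes equal values at
   i and j: paths to either leaf pass through the common parent. *)
Lemma cherry_balance p wi wj (i j : 'I_n.+1) u :
  is_leaf A wi -> is_leaf A wj -> lab wi = val i -> lab wj = val j -> A p wi -> A p wj ->
  muvec n A lab u != delta n [:: val i] -> muvec n A lab u != delta n [:: val j] ->
  muvec n A lab u i = muvec n A lab u j.
Proof.
move=> Li Lj li lj Api Apj ni nj.
have coord w (k : 'I_n.+1) : is_leaf A w -> A p w -> lab w = val k ->
    muvec n A lab u k = (u == w) + npaths A u p.
  move=> Lw Apw lw.
  by rewrite -(npaths_via_parent u Lw Apw) -(muvec_lab u Lw) lw inord_val.
rewrite (coord wi) // (coord wj) //.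
case: eqP => [uwi|_]; first by move: ni; rewrite uwi muvec_leaf // li eqxx.
by case: eqP => [uwj|_]; first by move: nj; rewrite uwj muvec_leaf // lj eqxx.
Qed.

End Network.

Unset Implicit Arguments.

Theorem mainTheorem3 (n : nat) (V : finType) (A : rel V) (lab : V -> nat)
  (i j : 'I_n.+1) :
  is_network n A lab -> 0 < val i -> 0 < val j -> i != j ->
  (net_cherry A lab (val i) (val j) <-> ms_cherry (mu_rep n A lab) i j).
Proof.
move=> netN i0 j0 ij; split.
- case=> [wi [wj [p [Li [Lj [li [lj [Api Apj]]]]]]]]; split.
    exact: (cherry_count netN i0 j0 ij Li Lj li lj Api Apj).
  by move=> x /mapP [u _ ->]; apply: (cherry_balance netN Li Lj li lj Api Apj).
- case=> count1 _.
  have /mapP [u] : delta n [:: val i; val j] \in mu_rep n A lab.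
    by rewrite -has_pred1 has_count count1.
  rewrite mem_filter => /andP[VTu _] Eu.
  have [wi [wj cherry]] := parent_of_delta_pair netN i0 j0 ij VTu (esym Eu).
  by exists wi, wj, u.
Qed.
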